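(* Let $r\ge 2$ and let $\pi$ be an $r$-homogeneous strongly log-concave distribution on $2^{[n]}$, and let $P_{\mathrm{BX},\pi}$ be the corresponding bases-exchange walk. Then the modified log-Sobolev constant satisfies $$\rho(P_{\mathrm{BX},\pi})\ge \frac{1}{r}.$$
   Context: A distribution $\pi:2^{[n]}\to\mathbb{R}_{\ge0}$ has generating polynomial $g_\pi(x)=\sum_{S\subseteq[n]}\pi(S)\prod_{i\in S}x_i$. It is $r$-homogeneous if $\pi(S)>0$ only when $|S|=r$. A polynomial $p$ with nonnegative coefficients is log-concave at $x\in\mathbb{R}^n_{\ge0}$ if the Hessian $\nabla^2\log p$ is negative semidefinite at $x$; it is strongly log-concave if for every index set $I\subseteq[n]$, $\partial_I p=\prod_{i\in I}\frac{\partial}{\partial x_i}p$ is log-concave at the all-ones vector. $\pi$ is strongly log-concave if $g_\pi$ is. Let $\Omega$ be the support of $\pi$ (its elements are called bases). The bases-exchange walk $P_{\mathrm{BX},\pi}$ on $\Omega$: from the current $B$, remove an element of $B$ chosen uniformly at random to get $S$, then move to a basis $B'\in\Omega$ with $B'\supset S$ with probability proportional to $\pi(B')$. For a reversible Markov chain $P$ on a finite set $\Omega$ with stationary distribution $\pi$, the Dirichlet form is $\mathcal{E}_P(f,g)=\sum_{x,y\in\Omega}\pi(x)f(x)[I-P](x,y)g(y)$, the entropy of $f:\Omega\to\mathbb{R}_{\ge0}$ is $\mathrm{Ent}_\pi(f)=\mathbb{E}_\pi(f\log f)-\mathbb{E}_\pi f\log\mathbb{E}_\pi f$ (with $0\log0=0$,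 natural log), and the modified log-Sobolev constant is $\rho(P)=\inf\{\mathcal{E}_P(f,\log f)/\mathrm{Ent}_\pi(f): f:\Omega\to\mathbb{R}_{\ge0},\ \mathrm{Ent}_\pi(f)\ne0\}$. *)

From HB Require Import structures.
From mathcomp Require Import all_boot all_order all_algebra.
From mathcomp Require Import all_classical all_reals all_analysis.
Set Implicit Arguments. Unset Strict Implicit. Unset Printing Implicit Defensive.
Import Order.TTheory GRing.Theory Num.Theory.
Import numFieldNormedType.Exports.
Local Open Scope ring_scope.

Section Defs.
Variables (R : realType) (n : nat).

(* Subsets of [n] are {set 'I_n}; points of R^n are row vectors 'rV[R]_n. *)
Definition dist_on (pi : {set 'I_n} -> R) : Prop :=
  (forall S, 0 <= pi S) /\ \sum_(S : {set 'I_n}) pi S = 1.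

Definition homogeneous (r : nat) (pi : {set 'I_n} -> R) : Prop :=
  forall S, 0 < pi S -> #|S| = r.

Definition gen_poly (pi : {set 'I_n} -> R) (x : 'rV[R]_n) : R :=
  \sum_(S : {set 'I_n}) pi S * \prod_(i in S) x ord0 i.

Definition basis_vec (i : 'I_n) : 'rV[R]_n := delta_mx ord0 i.

Definition pderiv (i : 'I_n) (f : 'rV[R]_n -> R) : 'rV[R]_n -> R :=
  fun x => derive f x (basis_vec i).

Definition pderivI (I : {set 'I_n}) (f : 'rV[R]_n -> R) : 'rV[R]_n -> R :=
  foldr pderiv f (enum I).

Definition hessian (f : 'rV[R]_n -> R) (x : 'rV[R]_n) : 'M[R]_n :=
  \matrix_(i, j) pderiv i (pderiv j f) x.

Definition nsd (M : 'M[R]_n) : Prop :=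
  forall v : 'rV[R]_n, (v *m M *m v^T) ord0 ord0 <= 0.

(* p log-concave at x: Hessian of log p is NSD at x.
   (MathComp's ln is 0 on nonpositive reals, so the zero polynomial is
   log-concave, matching the usual convention.) *)
Definition log_concave_at (p : 'rV[R]_n -> R) (x : 'rV[R]_n) : Prop :=
  nsd (hessian (fun y => ln (p y)) x).

Definition strongly_log_concave_poly (p : 'rV[R]_n -> R) : Prop :=
  forall I : {set 'I_n}, log_concave_at (pderivI I p) (const_mx 1).

Definition strongly_log_concave (pi : {set 'I_n} -> R) : Prop :=
  strongly_log_concave_poly (gen_poly pi).

Definition up_weight (pi : {set 'I_n} -> R) (S : {set 'I_n}) : R :=
  \sum_(C : {set 'I_n} | S \subset C) pi C.

(* Bases-exchange walk transition kernel (meaningful for B in the support). *)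
Definition bx_walk (pi : {set 'I_n} -> R) (B B' : {set 'I_n}) : R :=
  \sum_(i in B) (#|B|%:R)^-1 *
     (if (B :\ i) \subset B' then pi B' / up_weight pi (B :\ i) else 0).

(* Dirichlet form; terms outside the support have weight 0. *)
Definition dirichlet (pi : {set 'I_n} -> R)
    (P : {set 'I_n} -> {set 'I_n} -> R) (f g : {set 'I_n} -> R) : R :=
  \sum_(x : {set 'I_n}) \sum_(y : {set 'I_n})
     pi x * f x * ((x == y)%:R - P x y) * g y.

Definition expect (pi : {set 'I_n} -> R) (f : {set 'I_n} -> R) : R :=
  \sum_(x : {set 'I_n}) pi x * f x.

Definition entropy (pi : {set 'I_n} -> R) (f : {set 'I_n} -> R) : R :=
  expect pi (fun x => f x * ln (f x)) - expect pi f * ln (expect pi f).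

(* rho(P) >= c, i.e. c is below every ratio E(f, log f)/Ent(f). *)
Definition mlsi_lower_bound (pi : {set 'I_n} -> R)
    (P : {set 'I_n} -> {set 'I_n} -> R) (c : R) : Prop :=
  forall f : {set 'I_n} -> R,
    (forall x, 0 < pi x -> 0 < f x) ->
    entropy pi f != 0 ->
    c <= dirichlet pi P f (fun x => ln (f x)) / entropy pi f.

End Defs.

(* Fix f > 0 on the support of pi.  For S ⊆ [n] let w(S) and F(S) be the sums
   of pi(B) and pi(B) f(B) over the bases B ⊇ S, and let A_k be the sum over
   |S| = k of F(S) ln (F(S) / w(S)); then Ent(f) = A_r - A_0.  The Hessian at 1
   of the link polynomial ∂_S g_pi is the matrix (w(S ∪ {i, j}))_ij, and strong
   log-concavity makes it negative semidefinite orthogonally to the gradient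
   (w(S ∪ {i}))_i.  Testing it on the ratios F(S ∪ {i}) / w(S ∪ {i}) and
   combining with the log-sum inequality shows that k ↦ A_k / binom(r, k) is
   convex, whence Ent(f) ≤ r (A_r - A_{r-1} / r).  Jensen's inequality along
   one step of the walk bounds E(f, ln f) from below by A_r - A_{r-1} / r. *)

From HB Require Import structures.
From mathcomp Require Import all_boot all_order all_algebra.
From mathcomp Require Import all_classical all_reals all_analysis.
From mathcomp Require Import ring lra.
Import Order.TTheory GRing.Theory Num.Theory.
Import numFieldNormedType.Exports.
Local Open Scope ring_scope.

Set Implicit Arguments. Unset Strict Implicit. Unset Printing Implicit Defensive.

Section RealFacts.
Variable R : realType.

Lemma ln_le_subr1 (x : R) : 0 < x -> ln x <= x - 1.
Proof. by move=> x0; have := @le_ln1Dx R (x - 1); rewrite subrKC; apply; lra. Qed.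

Lemma ln_div_mul3 (x y u v : R) : 0 < x -> 0 < y -> 0 < u -> 0 < v ->
  ln (x / (u * v * y)) = ln (x / y) - ln u - ln v.
Proof.
move=> x0 y0 u0 v0; rewrite (_ : x / (u * v * y) = x / y * u^-1 * v^-1); last first.
  by field; rewrite !gt_eqF.
by rewrite !lnM ?lnV ?posrE ?invr_gt0 ?mulr_gt0 ?divr_gt0 ?invr_gt0.
Qed.

Lemma sumr_gt0_exists (I : finType) (a : I -> R) : 0 < \sum_k a k -> exists k, 0 < a k.
Proof.
move=> A0; case: (pickP (fun k => 0 < a k)) => [k /= ak|H]; first by exists k.
suff : \sum_k a k <= 0 by rewrite leNgt A0.
by apply: sumr_le0 => k _; have := H k; rewrite /= ltNge => /negbFE.
Qed.

Lemma log_sum_term_le (a b A B : R) :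
  0 <= a -> 0 <= b -> (0 < a -> 0 < b) -> 0 < A -> 0 < B ->
  a * (ln (A / B) - ln (a / b)) <= A * b / B - a.
Proof.
move=> a0 b0 ab A0 B0; have [->|a_neq0] := eqVneq a 0.
  by rewrite mul0r subr0 divr_ge0 ?mulr_ge0 // ltW.
have ap : 0 < a by rewrite lt_def a_neq0 a0.
have bp := ab ap.
rewrite -ln_div ?posrE ?divr_gt0 //.
apply: le_trans (ler_wpM2l (ltW ap) (ln_le_subr1 _)) _; first by rewrite !divr_gt0.
by rewrite le_eqVlt; apply/orP; left; apply/eqP; field; rewrite !gt_eqF.
Qed.

Lemma log_sum_ineq (I : finType) (a b : I -> R) :
  (forall k, 0 <= a k) -> (forall k, 0 <= b k) -> (forall k, 0 < a k -> 0 < b k) ->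
  0 < \sum_k a k ->
  (\sum_k a k) * ln ((\sum_k a k) / (\sum_k b k)) <= \sum_k a k * ln (a k / b k).
Proof.
move=> a0 b0 ab A0.
have [k ak] := sumr_gt0_exists A0.
have B0 : 0 < \sum_k b k.
  by rewrite (bigD1 k) //= ltr_pwDl ?ab ?sumr_ge0.
rewrite -subr_ge0 mulr_suml -sumrB -oppr_le0 -sumrN.
apply: (@le_trans _ _ (\sum_k ((\sum_k a k) * b k / (\sum_k b k) - a k))).
  apply: ler_sum => i _; rewrite opprB -mulrBr.
  exact: log_sum_term_le (a0 i) (b0 i) (ab i) A0 B0.
by rewrite sumrB -mulr_suml -mulr_sumr -mulrA divff ?gt_eqF // mulr1 subrr.
Qed.

Lemma convex_seq_chord_le (B : nat -> R) (r : nat) :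
  (forall j, (j.+2 <= r.+1)%N -> 2 * B j.+1 <= B j + B j.+2) ->
  B r.+1 - B 0 <= r.+1%:R * (B r.+1 - B r).
Proof.
move=> convB; suff : forall k, (k <= r)%N -> B k.+1 - B 0 <= k.+1%:R * (B k.+1 - B k).
  exact.
elim=> [|k IH] lt_k_r; first by rewrite mul1r.
have IHk := IH (ltnW lt_k_r); have convBk := convB k lt_k_r.
have : k.+1%:R * (B k.+1 - B k) <= k.+1%:R * (B k.+2 - B k.+1) :> R.
  by apply: ler_wpM2l => //; lra.
by rewrite -natr1; lra.
Qed.

End RealFacts.

Section QuadShift.
Variables (R : realType) (I : finType) (G : I -> I -> R).
Hypothesis G_sym : forall i j, G i j = G j i.

Lemma sym_quad_shift (x : I -> R) :
  \sum_i \sum_j (x i - 1) * (x j - 1) * G i j =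
  \sum_i \sum_j x i * x j * G i j - 2 * \sum_i x i * \sum_j G i j + \sum_i \sum_j G i j.
Proof.
have col : \sum_i \sum_j x j * G i j = \sum_i x i * \sum_j G i j.
  rewrite exchange_big /=; apply: eq_bigr => i _; rewrite mulr_sumr.
  by apply: eq_bigr => j _; rewrite G_sym.
have row : \sum_i \sum_j x i * G i j = \sum_i x i * \sum_j G i j.
  by apply: eq_bigr => i _; rewrite mulr_sumr.
rewrite mulr_natl mulr2n -{1}row -col opprD !addrA -!sumrB -big_split /=.
apply: eq_bigr => i _; rewrite -!sumrB -!big_split /=.
by apply: eq_bigr => j _; ring.
Qed.

End QuadShift.

Section UpWeight.
Variables (R : realType) (n r : nat).
Local Notation T := {set 'I_n}.

Definition ext1 (F : T -> R) (S : T) (i : 'I_n) : R :=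
  if i \in S then 0 else F (i |: S).

Definition ext2 (F : T -> R) (S : T) (i j : 'I_n) : R :=
  if (i \notin S) && (j \notin S) && (i != j) then F (i |: (j |: S)) else 0.

Lemma ext2C F S i j : ext2 F S i j = ext2 F S j i.
Proof. by rewrite /ext2 (eq_sym i j) [(i \notin S) && _]andbC finset.setUCA. Qed.

Lemma sum_ext2 F S i :
  \sum_j ext2 F S i j = ext1 (fun U => \sum_j ext1 F U j) S i.
Proof.
rewrite /ext1; case: ifP => iS; first by rewrite big1 // => j _; rewrite /ext2 iS.
apply: eq_bigr => j _; rewrite /ext2 in_setU1 finset.setUCA iS /=.
by case: (j =P i) => [->|/eqP ji]; [rewrite eqxx andbF | rewrite eq_sym ji andbT; case: (j \in S)].
Qed.

Lemma up_weight_set0 (rho : T -> R) : up_weight rho finset.set0 = \sum_C rho C.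
Proof. by apply: eq_bigl => C; rewrite finset.sub0set. Qed.

Lemma sum_setU1_mem (H : T -> 'I_n -> R) :
  \sum_(x : T) \sum_(i in x) H x i = \sum_(S : T) \sum_i (if i \in S then 0 else H (i |: S) i).
Proof.
rewrite (exchange_big_dep xpredT) //= [RHS]exchange_big /=; apply: eq_bigr => i _.
rewrite (reindex_onto (fun S => i |: S) (fun U => U :\ i)) /=; last first.
  by move=> U iU; rewrite finset.setD1K.
rewrite [LHS]big_mkcond; apply: eq_bigr => S _.
case iS: (i \in S) => /=; last by rewrite setU11 setU1K ?iS // eqxx.
case: ifP => // /andP [_ /eqP E].
by have := setD11 i (i |: S); rewrite E iS.
Qed.

Lemma sum_card_ext1 F k :
  \sum_(S : T | #|S| == k) \sum_i ext1 F S i = k.+1%:R * \sum_(U : T | #|U| == k.+1) F U.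
Proof.
pose G (U : T) := if #|U| == k.+1 then F U else 0.
transitivity (\sum_(S : T) \sum_i (if i \in S then 0 else G (i |: S))).
  rewrite big_mkcond; apply: eq_bigr => S _; rewrite /ext1 /G.
  case: eqP => Sk; last first.
    by rewrite big1 // => i _; case: ifP => iS //; rewrite cardsU1 iS add1n eqSS (introF eqP Sk).
  by apply: eq_bigr => i _; case: ifP => iS //; rewrite cardsU1 iS add1n eqSS Sk eqxx.
rewrite -(sum_setU1_mem (fun U _ => G U)) mulr_sumr [RHS]big_mkcond; apply: eq_bigr => U _.
by rewrite sumr_const /G; case: eqP => [->|_]; rewrite ?mulr_natl ?mul0rn ?mulr0.
Qed.

Lemma sum_card_ext2 F k :
  \sum_(S : T | #|S| == k) \sum_i \sum_j ext2 F S i j =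
  k.+1%:R * k.+2%:R * \sum_(U : T | #|U| == k.+2) F U.
Proof.
under eq_bigr => S _ do under eq_bigr => i _ do rewrite sum_ext2.
by rewrite sum_card_ext1 sum_card_ext1 mulrA.
Qed.

Section NonnegWeight.
Variable rho : T -> R.
Hypothesis rho_ge0 : forall C, 0 <= rho C.

Lemma up_weight_ge0 (S : T) : 0 <= up_weight rho S.
Proof. exact: sumr_ge0. Qed.

Lemma up_weight_le (S S' : T) : S \subset S' -> up_weight rho S' <= up_weight rho S.
Proof.
move=> SS'; rewrite /up_weight [X in _ <= X]big_mkcond [X in X <= _]big_mkcond.
apply: ler_sum => C _; case: ifP => [S'C|_]; first by rewrite (fintype.subset_trans SS' S'C).
by case: ifP.
Qed.

End NonnegWeight.

Section HomogeneousWeight.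
Variable rho : T -> R.
Hypothesis rho_card : forall C, rho C != 0 -> #|C| = r.

Lemma up_weight_card (U : T) : #|U| = r -> up_weight rho U = rho U.
Proof.
move=> Ur; rewrite /up_weight (bigD1 U) //= big1 ?addr0 // => C /andP [UC CU].
apply/eqP; apply: contraT => /rho_card Cr.
have : U == C by rewrite eqEcard UC Cr Ur leqnn.
by rewrite eq_sym (negPf CU).
Qed.

Lemma sum_ext1_up_weight (S : T) :
  \sum_i ext1 (up_weight rho) S i = (r - #|S|)%:R * up_weight rho S.
Proof.
transitivity (\sum_i \sum_(C : T) (if (i \notin S) && (i |: S \subset C) then rho C else 0)).
  apply: eq_bigr => i _; rewrite /ext1; case: ifP => iS /=; first by rewrite big1.
  by rewrite /up_weight big_mkcond.
rewrite exchange_big /= /up_weight mulr_sumr [RHS]big_mkcond /=; apply: eq_bigr => C _.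
case SC: (S \subset C); last first.
  apply: big1 => i _; case: ifP => // /andP [_ H].
  by rewrite (fintype.subset_trans (finset.subsetUr _ _) H) in SC.
transitivity (\sum_(i in C :\: S) rho C).
  rewrite [RHS]big_mkcond; apply: eq_bigr => i _.
  by rewrite !inE finset.subUset finset.sub1set SC andbT andbC.
rewrite sumr_const; have [->|/rho_card rC] := eqVneq (rho C) 0; first by rewrite mul0rn mulr0.
by rewrite cardsD (finset.setIidPr SC) rC mulr_natl.
Qed.

Lemma sum_ext2_up_weight (S : T) i :
  \sum_j ext2 (up_weight rho) S i j = (r - #|S|.+1)%:R * ext1 (up_weight rho) S i.
Proof.
rewrite sum_ext2 /ext1; case: ifP => iS; first by rewrite mulr0.
by rewrite sum_ext1_up_weight cardsU1 iS.
Qed.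

End HomogeneousWeight.
End UpWeight.

Section AffineDerive.
Local Open Scope classical_set_scope.
Variable R : realType.

Lemma is_derive_affine (a b : R) : is_derive (0:R) 1 (fun h : R => a + h * b) b.
Proof.
have := is_deriveD (is_derive_cst a (0:R) 1)
  (is_deriveM (is_derive_id (0:R) 1) (is_derive_cst b (0:R) 1)).
move=> H; apply: is_derive_eq H _.
by rewrite /= scaler0 !add0r /GRing.scale /= mulr1.
Qed.

Lemma derive_ln_affine (a b : R) : 0 < a ->
  derive (fun h : R => ln (a + h * b)) 0 1 = b / a.
Proof.
move=> a0; have ln_a : is_derive ((fun h : R => a + h * b) 0) 1 (@ln R) a^-1.
  by rewrite mul0r addr0; apply: is_derive1_ln.
have := @is_derive1_comp R (@ln R) (fun h => a + h * b) 0 a^-1 b ln_a (is_derive_affine a b).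
by move=> [_ ->]; rewrite mulrC.
Qed.

Lemma derive_affine_ratio (a b c d : R) : 0 < c ->
  derive (fun h : R => (a + h * b) / (c + h * d)) 0 1 = (b * c - a * d) / c ^+ 2.
Proof.
move=> c0; have c_neq0 : (fun h : R => c + h * d) 0 != 0 by rewrite /= mul0r addr0 gt_eqF.
have [_ ->] := is_deriveM (is_derive_affine a b)
  (@is_deriveV R (fun h => c + h * d) 0 d 1 c_neq0 (is_derive_affine c d)).
by rewrite /= !mul0r !addr0 /GRing.scale /=; field; rewrite gt_eqF.
Qed.

Lemma near_affine_gt0 (c d : R) : 0 < c -> \forall h \near (0:R), 0 < c + h * d.
Proof.
move=> c0; have : (fun h : R => c + h * d) @ (0:R) --> c + 0 * d.
  by apply: cvgD; [exact: cvg_cst | apply: cvgM; [exact: cvg_id | exact: cvg_cst]].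
by rewrite mul0r addr0 => /cvgr_gt; apply.
Qed.

End AffineDerive.

Section SetPoly.
Variables (R : realType) (n : nat).
Local Notation T := {set 'I_n}.

Definition set_poly (c : T -> R) (D : T -> T) (x : 'rV[R]_n) : R :=
  \sum_(C : T) c C * \prod_(k in D C) x ord0 k.

Definition dcoef (i : 'I_n) (c : T -> R) (D : T -> T) : T -> R :=
  fun C => if i \in D C then c C else 0.

Definition dsupp (i : 'I_n) (D : T -> T) : T -> T := fun C => D C :\ i.

Definition link_coef (pi : T -> R) (S : T) : T -> R := fun C => if S \subset C then pi C else 0.
Definition link_supp (S : T) : T -> T := fun C => C :\: S.

Lemma shift_basis_vecE i (h : R) (x : 'rV[R]_n) k :
  (h *: basis_vec R i + x) ord0 k = x ord0 k + (if k == i then h else 0).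
Proof.
rewrite !mxE eqxx /=; case: eqP => _; last by rewrite mulr0 add0r addr0.
by rewrite mulr1 addrC.
Qed.

Lemma set_poly_shift c D i (h : R) x :
  set_poly c D (h *: basis_vec R i + x) =
  set_poly c D x + h * set_poly (dcoef i c D) (dsupp i D) x.
Proof.
rewrite /set_poly mulr_sumr -big_split /=; apply: eq_bigr => C _.
rewrite /dcoef /dsupp; case: ifP => iD; last first.
  rewrite mul0r mulr0 addr0; congr (_ * _); apply: eq_bigr => k kD.
  by rewrite shift_basis_vecE; case: eqP => [ki|_]; [rewrite ki iD in kD | rewrite addr0].
rewrite (bigD1 i) //= [in RHS](bigD1 i) //= shift_basis_vecE eqxx.
rewrite (eq_bigr (fun k => x ord0 k)); last first.
  by move=> k /andP [_ /negPf ki]; rewrite shift_basis_vecE ki addr0.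
rewrite (eq_bigl (fun k => k \in D C :\ i)); last by move=> k; rewrite !inE andbC.
ring.
Qed.

Lemma set_poly_one c D : set_poly c D (const_mx 1) = \sum_C c C.
Proof.
by apply: eq_bigr => C _; rewrite big1 ?mulr1 // => k _; rewrite mxE.
Qed.

Lemma derive_along_line (f : 'rV[R]_n -> R) x v (phi : R -> R) :
  (\forall h \near 0, f (h *: v + x) = phi h) -> derive f x v = derive phi 0 1.
Proof.
move=> f_phi; have fx : f x = phi 0.
  by have := nbhs_singleton f_phi; rewrite scale0r add0r.
have hA h : h%:A + 0 = h :> R by rewrite addr0 /GRing.scale /= mulr1.
rewrite /derive; congr (lim _).
rewrite eqEsubset; split; apply/near_eq_cvg/cvg_within => /=;
  near=> h; rewrite /shift /= fx hA; congr (_ *: (_ - _)); near: h => //.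
by apply: filterS f_phi => h ->.
Unshelve. all: by end_near.
Qed.

Lemma pderiv_set_poly c D i :
  pderiv i (set_poly c D) = set_poly (dcoef i c D) (dsupp i D).
Proof.
apply: funext => x; rewrite /pderiv (@derive_along_line _ _ _
  (fun h => set_poly c D x + h * set_poly (dcoef i c D) (dsupp i D) x)).
  by have [_ ->] := is_derive_affine (set_poly c D x) (set_poly (dcoef i c D) (dsupp i D) x).
by near=> h; rewrite set_poly_shift.
Unshelve. all: by end_near.
Qed.

Lemma pderiv_ln_set_poly c D j y : 0 < set_poly c D y ->
  pderiv j (fun y => ln (set_poly c D y)) y =
  set_poly (dcoef j c D) (dsupp j D) y / set_poly c D y.
Proof.
move=> py; rewrite /pderiv (@derive_along_line _ _ _
  (fun h => ln (set_poly c D y + h * set_poly (dcoef j c D) (dsupp j D) y))).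
  exact: derive_ln_affine.
by near=> h; rewrite set_poly_shift.
Unshelve. all: by end_near.
Qed.

Lemma hessian_ln_set_poly c D i j y : 0 < set_poly c D y ->
  hessian (fun y => ln (set_poly c D y)) y i j =
  (set_poly (dcoef i (dcoef j c D) (dsupp j D)) (dsupp i (dsupp j D)) y * set_poly c D y
   - set_poly (dcoef j c D) (dsupp j D) y * set_poly (dcoef i c D) (dsupp i D) y)
  / set_poly c D y ^+ 2.
Proof.
move=> py; rewrite mxE {1}/pderiv (@derive_along_line _ _ _
  (fun h => (set_poly (dcoef j c D) (dsupp j D) y
             + h * set_poly (dcoef i (dcoef j c D) (dsupp j D)) (dsupp i (dsupp j D)) y)
            / (set_poly c D y + h * set_poly (dcoef i c D) (dsupp i D) y))).
  exact: derive_affine_ratio.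
near=> h; rewrite pderiv_ln_set_poly ?set_poly_shift //.
by near: h; exact: near_affine_gt0.
Unshelve. all: by end_near.
Qed.

Lemma foldr_pderiv_gen_poly (pi : T -> R) (s : seq 'I_n) : uniq s ->
  foldr (@pderiv R n) (gen_poly pi) s =
  set_poly (link_coef pi [set x in s]) (link_supp [set x in s]).
Proof.
elim: s => [_|a s IH /andP [aS us]] /=.
  apply: funext => x; apply: eq_bigr => C _.
  by rewrite /link_coef /link_supp finset.set_nil finset.sub0set finset.setD0.
rewrite IH // pderiv_set_poly /dcoef /dsupp /link_coef /link_supp set_cons.
congr set_poly; apply: funext => C.
  rewrite !inE finset.subUset finset.sub1set.
  by case: (a \in C); case: ([set x in s] \subset C); rewrite ?inE ?aS.
by apply/setP => k; rewrite !inE negb_or andbA [(k != a) && _]andbC.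
Qed.

Lemma quad_formE (u : 'rV[R]_n) (M : 'M[R]_n) :
  (u *m M *m u^T) ord0 ord0 = \sum_i \sum_j u ord0 i * M i j * u ord0 j.
Proof.
rewrite mxE exchange_big /=; apply: eq_bigr => j _.
by rewrite !mxE mulr_suml.
Qed.

Section LinkPoly.
Variables (pi : T -> R) (S : T).
Local Notation link_coef := (link_coef pi S).
Local Notation link_supp := (link_supp S).

Lemma pderivI_gen_poly : pderivI S (gen_poly pi) = set_poly link_coef link_supp.
Proof. by rewrite /pderivI foldr_pderiv_gen_poly ?enum_uniq // set_enum. Qed.

Lemma link_poly_one : set_poly link_coef link_supp (const_mx 1) = up_weight pi S.
Proof. by rewrite set_poly_one /up_weight [RHS]big_mkcond. Qed.

Lemma dlink_poly_one i :
  set_poly (dcoef i link_coef link_supp) (dsupp i link_supp) (const_mx 1) =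
  ext1 (up_weight pi) S i.
Proof.
rewrite set_poly_one /dcoef /ext1 /up_weight /link_supp /link_coef; case: ifP => iS.
  by apply: big1 => C _; rewrite !inE iS.
rewrite [RHS]big_mkcond; apply: eq_bigr => C _.
rewrite !inE iS finset.subUset finset.sub1set /=.
by case: (i \in C); case: (S \subset C).
Qed.

Lemma d2link_poly_one i j :
  set_poly (dcoef i (dcoef j link_coef link_supp) (dsupp j link_supp))
    (dsupp i (dsupp j link_supp)) (const_mx 1) = ext2 (up_weight pi) S i j.
Proof.
rewrite set_poly_one /dcoef /ext2 /dsupp /up_weight /link_supp /link_coef.
case: ifP => [/andP [/andP [iS jS] ij]|ijS].
  rewrite [RHS]big_mkcond; apply: eq_bigr => C _.
  rewrite !inE (negPf iS) (negPf jS) (negPf ij) !finset.subUset !finset.sub1set /=.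
  by case: (i \in C); case: (j \in C); case: (S \subset C).
apply: big1 => C _; rewrite !inE.
case: (i =P j) => [->|/eqP ij]; first by [].
case iS: (i \in S); first by [].
case jS: (j \in S) => /=; first by rewrite if_same.
by move: ijS; rewrite iS jS ij.
Qed.

End LinkPoly.

(* The Hessian of ln p is (p ∇²p - ∇p ∇pᵀ) / p², so on vectors orthogonal to
   ∇p its quadratic form is that of ∇²p divided by p. *)
Lemma slc_up_weight_quad (pi : T -> R) : strongly_log_concave pi ->
  forall S, 0 < up_weight pi S -> forall v : 'I_n -> R,
  \sum_i ext1 (up_weight pi) S i * v i = 0 ->
  \sum_i \sum_j v i * v j * ext2 (up_weight pi) S i j <= 0.
Proof.
move=> slc S wS v v_orth; have := slc S (\row_i v i).
rewrite /log_concave_at pderivI_gen_poly quad_formE.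
have p_gt0 : 0 < set_poly (link_coef pi S) (link_supp S) (const_mx 1).
  by rewrite link_poly_one.
set W := up_weight pi S in wS.
suff -> : \sum_i \sum_j (\row_k v k) ord0 i *
    hessian (fun y => ln (set_poly (link_coef pi S) (link_supp S) y)) (const_mx 1) i j
    * (\row_k v k) ord0 j =
  W^-1 * (\sum_i \sum_j v i * v j * ext2 (up_weight pi) S i j)
  - W^-2 * ((\sum_i ext1 (up_weight pi) S i * v i) * (\sum_j ext1 (up_weight pi) S j * v j)).
  by rewrite v_orth mul0r mulr0 subr0 pmulr_rle0 // invr_gt0.
rewrite mulr_suml !mulr_sumr -sumrB; apply: eq_bigr => i _.
rewrite !mulr_sumr -sumrB; apply: eq_bigr => j _.
rewrite hessian_ln_set_poly // d2link_poly_one !dlink_poly_one link_poly_one -/W !mxE.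
by field; rewrite gt_eqF.
Qed.

End SetPoly.

Section LevelEntropy.
Variables (R : realType) (n r : nat) (pi f : {set 'I_n} -> R).
Local Notation T := {set 'I_n}.
Hypothesis pi_ge0 : forall S, 0 <= pi S.
Hypothesis pi_hom : homogeneous r pi.
Hypothesis f_gt0 : forall S, 0 < pi S -> 0 < f S.

Definition pif (C : T) : R := pi C * f C.
Local Notation w := (up_weight pi).
Local Notation F := (up_weight pif).

(* Off the links of the support [w S = 0], and then [cmean S = 0] since [x / 0 = 0]. *)
Definition cmean (S : T) : R := F S / w S.
Definition wmean_xlnx (S : T) : R := F S * ln (cmean S).

Definition level_sum (k : nat) : R := \sum_(S : T | #|S| == k) wmean_xlnx S.
Definition level_avg (k : nat) : R := level_sum k / 'C(r, k)%:R.

Lemma pif_ge0 (C : T) : 0 <= pif C.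
Proof.
rewrite /pif; have [->|pi_neq0] := eqVneq (pi C) 0; first by rewrite mul0r.
have pi_gt0 : 0 < pi C by rewrite lt_def pi_neq0 pi_ge0.
by rewrite mulr_ge0 // ltW // f_gt0.
Qed.

Lemma pi_card (C : T) : pi C != 0 -> #|C| = r.
Proof. by move=> pi_neq0; apply: pi_hom; rewrite lt_def pi_neq0 pi_ge0. Qed.

Lemma pif_card (C : T) : pif C != 0 -> #|C| = r.
Proof.
move=> pif_neq0; apply: pi_card; apply: contraNneq pif_neq0 => pi0.
by rewrite /pif pi0 mul0r.
Qed.

Lemma F_eq0 (S : T) : w S = 0 -> F S = 0.
Proof.
move=> /(psumr_eq0P (fun C _ => pi_ge0 C)) pi0.
by apply: big1 => C /pi0; rewrite /pif => ->; rewrite mul0r.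
Qed.

Lemma w_gt0 (S : T) : 0 < F S -> 0 < w S.
Proof.
move=> FS; rewrite lt_def up_weight_ge0 // andbT; apply/eqP => /F_eq0 FS0.
by rewrite FS0 ltxx in FS.
Qed.

Lemma F_gt0 (S : T) : 0 < w S -> 0 < F S.
Proof.
rewrite /up_weight big_mkcond => /sumr_gt0_exists [C]; case: ifP => SC; last by rewrite ltxx.
move=> piC; rewrite (bigD1 C) //= ltr_pwDl ?sumr_ge0 // => [|D _]; last exact: pif_ge0.
by rewrite /pif mulr_gt0 // f_gt0.
Qed.

Lemma cmean_gt0_sub (U V : T) : U \subset V -> 0 < F V -> 0 < cmean U.
Proof.
move=> UV FV; have FU : 0 < F U := lt_le_trans FV (up_weight_le pif_ge0 UV).
by rewrite divr_gt0 ?w_gt0.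
Qed.

Lemma wmean_xlnx_eq0 (S U : T) : w S = 0 -> S \subset U -> wmean_xlnx U = 0.
Proof.
move=> wS SU; suff wU : w U = 0 by rewrite /wmean_xlnx F_eq0 // mul0r.
by apply/eqP; rewrite eq_le up_weight_ge0 // andbT -wS up_weight_le.
Qed.

Lemma ext1_cmeanK (S : T) i : ext1 w S i * ext1 cmean S i = ext1 F S i.
Proof.
rewrite /ext1 /cmean; case: ifP => _; first by rewrite mul0r.
have [wU0|wU_neq0] := eqVneq (w (i |: S)) 0; last by rewrite mulrCA divff // mulr1.
by rewrite wU0 mul0r F_eq0.
Qed.

Lemma ext2_xlnx_split (S : T) i j :
  ext2 F S i j * ln (ext2 F S i j / (ext1 cmean S i * ext1 cmean S j * ext2 w S i j))
  = ext2 wmean_xlnx S i j - ext2 F S i j * ln (ext1 cmean S i)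
    - ext2 F S i j * ln (ext1 cmean S j).
Proof.
rewrite /ext2 /ext1; case: ifP => [/andP [/andP [iS jS] _]|_]; last by rewrite !mul0r !subr0.
rewrite (negPf iS) (negPf jS); set U := i |: (j |: S).
have [FU0|FU_neq0] := eqVneq (F U) 0; first by rewrite /wmean_xlnx FU0 !mul0r !subr0.
have FU : 0 < F U by rewrite lt_def FU_neq0 up_weight_ge0 //; exact: pif_ge0.
have iU : i |: S \subset U by rewrite finset.setUS // finset.subsetUr.
have jU : j |: S \subset U by rewrite finset.subsetUr.
by rewrite ln_div_mul3 ?w_gt0 ?(cmean_gt0_sub iU) ?(cmean_gt0_sub jU) // /wmean_xlnx /cmean; ring.
Qed.

Lemma sum_ext2_F_ln_cmean (S : T) :
  \sum_i \sum_j ext2 F S i j * ln (ext1 cmean S i) =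
  (r - #|S|.+1)%:R * \sum_i ext1 wmean_xlnx S i.
Proof.
rewrite mulr_sumr; apply: eq_bigr => i _.
rewrite -mulr_suml (sum_ext2_up_weight pif_card) /ext1 /wmean_xlnx.
by case: ifP => _; rewrite ?mulr0 ?mul0r ?mulrA.
Qed.

Lemma ext1_cmean_ge0 (S : T) i : 0 <= ext1 cmean S i.
Proof.
by rewrite /ext1 /cmean; case: ifP => _ //; rewrite divr_ge0 ?up_weight_ge0 //; exact: pif_ge0.
Qed.

Lemma ext2_log_ratio_denom_gt0 (S : T) i j : 0 < ext2 F S i j ->
  0 < ext1 cmean S i * ext1 cmean S j * ext2 w S i j.
Proof.
rewrite /ext2; case: ifP => [/andP [/andP [iS jS] _] FU|_]; last by rewrite ltxx.
have ci : 0 < cmean (i |: S).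
  by apply: cmean_gt0_sub FU; rewrite finset.setUS // finset.subsetUr.
have cj : 0 < cmean (j |: S) by apply: cmean_gt0_sub FU; rewrite finset.subsetUr.
rewrite /ext1 (negPf iS) (negPf jS).
by apply: mulr_gt0; [exact: mulr_gt0 | exact: w_gt0].
Qed.

Lemma sum_ext2_log_ratio (S : T) :
  \sum_i \sum_j ext2 F S i j
      * ln (ext2 F S i j / (ext1 cmean S i * ext1 cmean S j * ext2 w S i j)) =
  \sum_i \sum_j ext2 wmean_xlnx S i j - 2 * (r - #|S|.+1)%:R * \sum_i ext1 wmean_xlnx S i.
Proof.
under eq_bigr => i _ do under eq_bigr => j _ do rewrite ext2_xlnx_split.
under eq_bigr => i _ do rewrite !sumrB.
rewrite -mulrA mulr_natl mulr2n opprD addrA !sumrB -sum_ext2_F_ln_cmean.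
rewrite exchange_big [X in _ - X]exchange_big /=.
by congr (_ - _ - _); apply: eq_bigr => i _; apply: eq_bigr => j _; rewrite ext2C.
Qed.

Section Link.
Hypothesis slc : strongly_log_concave pi.
Variable S : T.
Hypothesis wS_gt0 : 0 < w S.
Local Notation e := ((r - #|S|.+1)%:R : R).
Local Notation d := ((r - #|S|)%:R : R).

Lemma cmean_gt0 : 0 < cmean S.
Proof. by rewrite divr_gt0 ?F_gt0. Qed.

(* Strong log-concavity tested on the direction [ext1 cmean S / cmean S - 1],
   which is orthogonal to the gradient [ext1 w S]. *)
Lemma ext1_cmean_quad_le :
  \sum_i \sum_j ext1 cmean S i * ext1 cmean S j * ext2 w S i j
    <= cmean S ^+ 2 * (e * d * w S).
Proof.
set Q := \sum_i _; set m := cmean S; have m_gt0 : 0 < m := cmean_gt0.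
have Fm : F S / m = w S by rewrite /m /cmean; field; rewrite !gt_eqF ?F_gt0.
have sum_F : \sum_i ext1 F S i = d * F S := sum_ext1_up_weight pif_card S.
have row_sum i : \sum_j ext2 w S i j = e * ext1 w S i := sum_ext2_up_weight pi_card S i.
pose x i := ext1 cmean S i / m.
have orth : \sum_i ext1 w S i * (x i - 1) = 0.
  transitivity (\sum_i (ext1 F S i / m - ext1 w S i)).
    by apply: eq_bigr => i _; rewrite mulrBr mulr1 /x mulrA ext1_cmeanK.
  by rewrite sumrB -mulr_suml sum_F (sum_ext1_up_weight pi_card) -mulrA Fm subrr.
have := slc_up_weight_quad slc wS_gt0 orth.
rewrite sym_quad_shift; last exact: ext2C.
have -> : \sum_i \sum_j x i * x j * ext2 w S i j = Q / m ^+ 2.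
  rewrite /Q mulr_suml; apply: eq_bigr => i _; rewrite mulr_suml; apply: eq_bigr => j _.
  by rewrite /x; field; rewrite gt_eqF.
have -> : \sum_i x i * \sum_j ext2 w S i j = e * d * w S.
  under eq_bigr => i _ do rewrite row_sum.
  transitivity (e / m * \sum_i ext1 F S i).
    by rewrite mulr_sumr; apply: eq_bigr => i _; rewrite -ext1_cmeanK /x; ring.
  by rewrite sum_F -Fm; ring.
have -> : \sum_i \sum_j ext2 w S i j = e * d * w S.
  under eq_bigr => i _ do rewrite row_sum.
  by rewrite -mulr_sumr (sum_ext1_up_weight pi_card) mulrA.
by rewrite -ler_pdivrMl ?exprn_gt0 // mulrC; lra.
Qed.

(* The log-sum inequality over the pairs (i, j), whose sum of denominators is
   controlled by [ext1_cmean_quad_le]. *)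
Lemma link_ineq : (#|S|.+2 <= r)%N ->
  0 <= \sum_i \sum_j ext2 wmean_xlnx S i j - 2 * e * \sum_i ext1 wmean_xlnx S i
       + e * d * wmean_xlnx S.
Proof.
move=> Sr; have e_gt0 : 0 < e by rewrite ltr0n subn_gt0.
have d_gt0 : 0 < d by rewrite ltr0n subn_gt0 ltnW.
have FS := F_gt0 wS_gt0; set m := cmean S; have m_gt0 : 0 < m := cmean_gt0.
pose a (p : 'I_n * 'I_n) := ext2 F S p.1 p.2.
pose b (p : 'I_n * 'I_n) := ext1 cmean S p.1 * ext1 cmean S p.2 * ext2 w S p.1 p.2.
have sum_a : \sum_p a p = e * d * F S.
  rewrite -(pair_bigA _ (fun i j => ext2 F S i j)) /=.
  under eq_bigr => i _ do rewrite (sum_ext2_up_weight pif_card).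
  by rewrite -mulr_sumr (sum_ext1_up_weight pif_card) mulrA.
have sum_b : \sum_p b p = \sum_i \sum_j ext1 cmean S i * ext1 cmean S j * ext2 w S i j.
  by rewrite -(pair_bigA _ (fun i j => ext1 cmean S i * ext1 cmean S j * ext2 w S i j)).
have a_ge0 p : 0 <= a p.
  by rewrite /a /ext2; case: ifP => _ //; apply: up_weight_ge0; exact: pif_ge0.
have b_ge0 p : 0 <= b p.
  by rewrite /b !mulr_ge0 ?ext1_cmean_ge0 // /ext2; case: ifP => _ //; rewrite up_weight_ge0.
have ab p : 0 < a p -> 0 < b p := @ext2_log_ratio_denom_gt0 S p.1 p.2.
have sum_a_gt0 : 0 < \sum_p a p by rewrite sum_a !mulr_gt0.
have := log_sum_ineq a_ge0 b_ge0 ab sum_a_gt0.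
rewrite /a /b -(pair_bigA _ (fun i j => ext2 F S i j * ln (ext2 F S i j /
  (ext1 cmean S i * ext1 cmean S j * ext2 w S i j)))) /= sum_ext2_log_ratio -/(a _) -/(b _).
have ln_ratio : - ln m <= ln ((\sum_p a p) / (\sum_p b p)).
  have sum_b_gt0 : 0 < \sum_p b p.
    have [p /ab] := sumr_gt0_exists sum_a_gt0.
    by move=> bp; rewrite (bigD1 p) //= ltr_pwDl ?sumr_ge0.
  rewrite -lnV ?posrE // ler_ln ?posrE ?invr_gt0 ?divr_gt0 //.
  rewrite ler_pdivlMr // sum_a sum_b.
  apply: le_trans (ler_wpM2l _ ext1_cmean_quad_le) _; first by rewrite invr_ge0 ltW.
  rewrite le_eqVlt; apply/orP; left; apply/eqP; rewrite /m /cmean.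
  by field; rewrite !gt_eqF.
move=> log_sum; have := le_trans (ler_wpM2l (ltW sum_a_gt0) ln_ratio) log_sum.
by rewrite sum_a /wmean_xlnx -/m; lra.
Qed.

End Link.
Lemma level_edge_ineq (S : T) : strongly_log_concave pi -> (#|S|.+2 <= r)%N ->
  0 <= \sum_i \sum_j ext2 wmean_xlnx S i j
       - 2 * (r - #|S|.+1)%:R * \sum_i ext1 wmean_xlnx S i
       + (r - #|S|.+1)%:R * (r - #|S|)%:R * wmean_xlnx S.
Proof.
move=> slc Sr; have [wS0|wS_neq0] := eqVneq (w S) 0; last first.
  by apply: link_ineq; rewrite // lt_def wS_neq0 up_weight_ge0.
have -> : \sum_i ext1 wmean_xlnx S i = 0.
  rewrite big1 // => i _; rewrite /ext1; case: ifP => // _.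
  by apply: (wmean_xlnx_eq0 wS0); rewrite finset.subsetUr.
have -> : \sum_i \sum_j ext2 wmean_xlnx S i j = 0.
  rewrite big1 // => i _; rewrite big1 // => j _; rewrite /ext2; case: ifP => // _.
  by apply: (wmean_xlnx_eq0 wS0); rewrite finset.subsetU // finset.subsetUr orbT.
by rewrite (wmean_xlnx_eq0 wS0 (subxx _)) !mulr0 subrr addr0.
Qed.

Lemma level_avg_convex j : strongly_log_concave pi -> (j.+2 <= r)%N ->
  2 * level_avg j.+1 <= level_avg j + level_avg j.+2.
Proof.
move=> slc jr; set e : R := (r - j.+1)%:R; set d : R := (r - j)%:R.
have : 0 <= \sum_(S : T | #|S| == j) (\sum_i \sum_k ext2 wmean_xlnx S i k
    - 2 * e * \sum_i ext1 wmean_xlnx S i + e * d * wmean_xlnx S).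
  by apply: sumr_ge0 => S /eqP Sj; rewrite /e /d -Sj level_edge_ineq // Sj.
rewrite big_split /= sumrB -!mulr_sumr sum_card_ext1 sum_card_ext2 -/(level_sum _).
have e_gt0 : 0 < e by rewrite ltr0n subn_gt0.
have d_gt0 : 0 < d by rewrite ltr0n subn_gt0 ltnW.
have bin_gt0 k : (k <= r)%N -> 0 < 'C(r, k)%:R :> R by move=> kr; rewrite ltr0n bin_gt0.
have c0 := bin_gt0 j (ltnW (ltnW jr)); have c1 := bin_gt0 j.+1 (ltnW jr).
have c2 := bin_gt0 j.+2 jr.
have bin1 : j.+1%:R * 'C(r, j.+1)%:R = d * 'C(r, j)%:R :> R by rewrite -!natrM mul_bin_left.
have bin2 : j.+2%:R * 'C(r, j.+2)%:R = e * 'C(r, j.+1)%:R :> R by rewrite -!natrM mul_bin_left.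
rewrite /level_avg; set C0 := 'C(r, j)%:R in c0 bin1 *; set C1 := 'C(r, j.+1)%:R in c1 bin1 bin2 *.
set C2 := 'C(r, j.+2)%:R in c2 bin2 *.
set a0 := level_sum j; set a1 := level_sum j.+1; set a2 := level_sum j.+2.
have -> : j.+1%:R * j.+2%:R * a2 - 2 * e * (j.+1%:R * a1) + e * d * a0 =
    e * d * C0 * (a0 / C0 + a2 / C2 - 2 * (a1 / C1)).
  have j1 : 0 < j.+1%:R :> R by rewrite ltr0n.
  have -> : e * d * C0 * (a0 / C0 + a2 / C2 - 2 * (a1 / C1)) =
      e * d * a0 + j.+1%:R * (e * (d * C0)) * a2 / (j.+1%:R * C2) - 2 * e * (d * C0) * a1 / C1.
    by field; rewrite !gt_eqF.
  by rewrite -bin1 (mulrCA e) -bin2; field; rewrite !gt_eqF.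
by rewrite pmulr_rge0 ?mulr_gt0 // subr_ge0.
Qed.

Lemma level_sum_top : level_sum r = \sum_S pi S * f S * ln (f S).
Proof.
rewrite /level_sum [RHS](bigID (fun S : T => #|S| == r)) /= [X in _ = _ + X]big1 ?addr0.
  apply: eq_bigr => S /eqP Sr; rewrite /wmean_xlnx /cmean.
  rewrite (up_weight_card pi_card Sr) (up_weight_card pif_card Sr) /pif.
  have [->|pi_neq0] := eqVneq (pi S) 0; first by rewrite !mul0r.
  by rewrite [pi S * f S / pi S]mulrAC divff // mul1r.
move=> S Sr; have -> : pi S = 0 by apply/eqP; apply: contraNT Sr => /pi_card ->.
by rewrite !mul0r.
Qed.

Local Notation wlnf := (up_weight (fun C => pi C * ln (f C))).

Lemma wlnf_le (S : T) : 0 < w S -> wlnf S <= w S * ln (cmean S).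
Proof.
move=> wS; pose a (C : T) := if S \subset C then pi C else 0.
pose b (C : T) := if S \subset C then pif C else 0.
have a_ge0 C : 0 <= a C by rewrite /a; case: ifP.
have b_ge0 C : 0 <= b C by rewrite /b; case: ifP => _ //; exact: pif_ge0.
have ab C : 0 < a C -> 0 < b C.
  by rewrite /a /b; case: ifP => _ // piC; rewrite /pif mulr_gt0 // f_gt0.
have sum_a : \sum_C a C = w S by rewrite /up_weight [RHS]big_mkcond.
have sum_b : \sum_C b C = F S by rewrite /up_weight [RHS]big_mkcond.
have := log_sum_ineq a_ge0 b_ge0 ab; rewrite sum_a sum_b => /(_ wS).
have -> : \sum_C a C * ln (a C / b C) = - wlnf S.
  rewrite /up_weight [X in _ = - X]big_mkcond -sumrN; apply: eq_bigr => C _; rewrite /a /b.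
  case: ifP => _; last by rewrite mul0r oppr0.
  have [->|pi_neq0] := eqVneq (pi C) 0; first by rewrite !mul0r oppr0.
  have fC : 0 < f C by rewrite f_gt0 // lt_def pi_neq0 pi_ge0.
  by rewrite /pif invfM mulrA divff // mul1r lnV ?posrE // mulrN.
by rewrite -invf_div lnV ?posrE ?divr_gt0 ?F_gt0 // mulrN lerN2.
Qed.

Lemma wlnf_mean_le (S : T) : wlnf S / w S * F S <= wmean_xlnx S.
Proof.
have [wS0|wS_neq0] := eqVneq (w S) 0.
  by rewrite /wmean_xlnx /cmean wS0 invr0 !mulr0 mul0r ln0 // mulr0.
have wS : 0 < w S by rewrite lt_def wS_neq0 up_weight_ge0.
rewrite /wmean_xlnx mulrC; apply: ler_wpM2l; first by apply: up_weight_ge0; exact: pif_ge0.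
by rewrite /cmean ler_pdivrMr // mulrC wlnf_le.
Qed.

Lemma sum_ext1_pif (S : T) :
  \sum_i ext1 pif S i = if #|S|.+1 == r then F S else 0.
Proof.
case: eqP => Sr.
  have := sum_ext1_up_weight pif_card S; rewrite -Sr subSnn mul1r => <-.
  apply: eq_bigr => i _; rewrite /ext1; case: ifP => iS //.
  by rewrite (up_weight_card pif_card) // cardsU1 iS.
apply: big1 => i _; rewrite /ext1; case: ifP => iS //.
apply/eqP; apply: contraT => /pif_card; rewrite cardsU1 iS add1n => Sr'.
by rewrite Sr' in Sr.
Qed.

Lemma bx_walk_ln_sum (x : T) :
  \sum_y pi x * f x * bx_walk pi x y * ln (f y) =
  r%:R^-1 * \sum_(i in x) pif x / w (x :\ i) * wlnf (x :\ i).
Proof.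
have [pi0|/pi_card x_card] := eqVneq (pi x) 0.
  rewrite big1; last by move=> y _; rewrite pi0 !mul0r.
  by rewrite big1 ?mulr0 // => i _; rewrite /pif pi0 !mul0r.
rewrite /bx_walk x_card mulr_sumr.
under eq_bigr => y _ do rewrite mulr_sumr mulr_suml.
rewrite exchange_big /=; apply: eq_bigr => i _.
rewrite /up_weight [X in _ = _ * (_ * X)]big_mkcond !mulr_sumr; apply: eq_bigr => y _.
by case: ifP => _; rewrite /pif; [ring | rewrite !mulr0 mul0r].
Qed.

Lemma level_gap_le_dirichlet : (0 < r)%N ->
  level_sum r - level_sum r.-1 / r%:R <= dirichlet pi (bx_walk pi) f (fun x => ln (f x)).
Proof.
move=> r_gt0.
have -> : dirichlet pi (bx_walk pi) f (fun x => ln (f x)) =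
    \sum_x pi x * f x * ln (f x) - \sum_x \sum_y pi x * f x * bx_walk pi x y * ln (f y).
  rewrite /dirichlet -sumrB; apply: eq_bigr => x _.
  under eq_bigr => y _ do rewrite mulrBr mulrBl.
  rewrite sumrB (bigD1 x) //= eqxx mulr1 big1 ?addr0 // => y /negbTE.
  by rewrite eq_sym => ->; rewrite mulr0 !mul0r.
rewrite -level_sum_top lerD2l lerN2.
under eq_bigr => x _ do rewrite bx_walk_ln_sum.
rewrite -mulr_sumr sum_setU1_mem.
have shift (S : T) :
    \sum_i (if i \in S then 0 else pif (i |: S) / w ((i |: S) :\ i) * wlnf ((i |: S) :\ i))
    = wlnf S / w S * \sum_i ext1 pif S i.
  rewrite mulr_sumr; apply: eq_bigr => i _; rewrite /ext1.
  case: ifP => iS; first by rewrite mulr0.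
  by rewrite setU1K ?iS //; ring.
under eq_bigr => S _ do rewrite shift sum_ext1_pif.
rewrite mulrC ler_wpM2r ?invr_ge0 ?ler0n //.
apply: (@le_trans _ _ (\sum_(S : T) (if #|S|.+1 == r then wmean_xlnx S else 0))).
  by apply: ler_sum => S _; case: ifP => _; rewrite ?mulr0 // wlnf_mean_le.
rewrite /level_sum -big_mkcond /= (eq_bigl (fun S : T => #|S| == r.-1)) // => S.
by apply/eqP/eqP => [<- // | ->]; exact: prednK.
Qed.

Section Distribution.
Hypothesis pi_sum1 : \sum_S pi S = 1.

Lemma level_sum_bottom : level_sum 0 = (\sum_S pi S * f S) * ln (\sum_S pi S * f S).
Proof.
rewrite /level_sum (big_pred1 finset.set0) => [|S]; last by rewrite /= cards_eq0.
by rewrite /wmean_xlnx /cmean !up_weight_set0 pi_sum1 divr1.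
Qed.

Lemma entropy_level_sum : entropy pi f = level_sum r - level_sum 0.
Proof.
rewrite /entropy /expect level_sum_top level_sum_bottom.
by congr (_ - _); apply: eq_bigr => x _; rewrite mulrA.
Qed.

Lemma entropy_ge0 : 0 <= entropy pi f.
Proof.
rewrite entropy_level_sum level_sum_top level_sum_bottom subr_ge0.
have [x pi_x] : exists x, 0 < pi x by apply: sumr_gt0_exists; rewrite pi_sum1 ltr01.
have pif_pi C : 0 < pif C -> 0 < pi C.
  rewrite /pif; have [->|pi_neq0] := eqVneq (pi C) 0; first by rewrite mul0r ltxx.
  by move=> _; rewrite lt_def pi_neq0 pi_ge0.
have sum_pif : 0 < \sum_C pif C.
  rewrite (bigD1 x) //= ltr_pwDl ?sumr_ge0 // => [|C _]; last exact: pif_ge0.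
  by rewrite mulr_gt0 ?f_gt0.
have := log_sum_ineq pif_ge0 pi_ge0 pif_pi sum_pif.
rewrite pi_sum1 divr1 => /le_trans; apply.
rewrite le_eqVlt; apply/orP; left; apply/eqP; apply: eq_bigr => C _; rewrite /pif.
have [->|pi_neq0] := eqVneq (pi C) 0; first by rewrite !mul0r.
by rewrite [pi C * f C / pi C]mulrAC divff // mul1r.
Qed.

Lemma entropy_le_level_gap : strongly_log_concave pi -> (0 < r)%N ->
  entropy pi f <= r%:R * (level_sum r - level_sum r.-1 / r%:R).
Proof.
move=> slc r_gt0; have rE : r = r.-1.+1 by rewrite prednK.
have bin_pred : 'C(r, r.-1) = r by rewrite {1}rE binSn -rE.
have := @convex_seq_chord_le R level_avg r.-1.
rewrite -rE => /(_ (fun j jr => level_avg_convex slc jr)).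
by rewrite /level_avg binn bin0 bin_pred !divr1 -entropy_level_sum.
Qed.

End Distribution.
End LevelEntropy.

Unset Implicit Arguments.

Theorem theorem1p1 (R : realType) (n r : nat) (pi : {set 'I_n} -> R) :
  (2 <= r)%N ->
  dist_on pi ->
  homogeneous r pi ->
  strongly_log_concave pi ->
  mlsi_lower_bound pi (bx_walk pi) (r%:R)^-1.
Proof.
move=> r_ge2 [pi_ge0 pi_sum1] pi_hom slc f f_gt0 ent_neq0.
have r_gt0 : (0 < r)%N by apply: ltnW.
have ent_gt0 : 0 < entropy pi f.
  by rewrite lt_def ent_neq0 (entropy_ge0 pi_ge0 pi_hom f_gt0 pi_sum1).
rewrite ler_pdivlMr // mulrC ler_pdivrMr ?ltr0n // mulrC.
apply: le_trans (entropy_le_level_gap pi_ge0 pi_hom f_gt0 pi_sum1 slc r_gt0) _.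
by rewrite ler_wpM2l ?ler0n // (level_gap_le_dirichlet pi_ge0 pi_hom f_gt0 r_gt0).
Qed.
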